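(* Let $N$ be a positive integer, $a,b,c\in\mathbb{R}$ with $a\neq0$, $W=[w_{ij}]\in\mathbb{R}^{N\times N}$ with $w_{ii}=0$ for all $i$, $\Delta=\mathrm{diag}(\delta_1,\dots,\delta_N)$ with $\delta_i\in\{0,1\}$, and $h>0$. Put $\Phi_s=e^{ah}I_N+\frac{c}{a}(e^{ah}-1)W$ and $\Psi_s=\frac{b}{a}(e^{ah}-1)\Delta$. If the pair $(W,\Delta)$ is controllable, $b\neq0$ and $c\neq0$, then the discrete-time system $X(k+1)=\Phi_sX(k)+\Psi_sU(k)$ is controllable.
   Context: This is the networked sampled-data system with one-dimensional node dynamics (node state matrix $a$, input matrix $b$, and inner coupling $HC=c$). The discrete-time system $X(k+1)=\Phi_sX(k)+\Psi_sU(k)$, $X(k)\in\mathbb{R}^N$, $U(k)\in\mathbb{R}^N$, is called controllable if every initial state can be steered to the origin in finitely many steps. For $F\in\mathbb{C}^{q\times q}$, $G\in\mathbb{C}^{q\times s}$, the pair $(F,G)$ is called controllable if $\mathrm{rank}[sI_q-F,\ G]=q$ for every $s\in\mathbb{C}$. *)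

From HB Require Import structures.
From mathcomp Require Import all_boot all_order all_algebra.
From mathcomp Require Import complex.
From mathcomp Require Import reals sequences.
Set Implicit Arguments. Unset Strict Implicit. Unset Printing Implicit Defensive.
Import Order.TTheory GRing.Theory Num.Theory.
Local Open Scope ring_scope.

Definition pair_controllable (K : fieldType) (q s : nat)
  (F : 'M[K]_q) (G : 'M[K]_(q, s)) : Prop :=
  forall z : K, \rank (row_mx (z%:M - F) G) = q.

Fixpoint traj (K : pzRingType) (N : nat) (Phi Psi : 'M[K]_N) (X0 : 'cV[K]_N)
  (U : nat -> 'cV[K]_N) (k : nat) : 'cV[K]_N :=
  match k with
  | 0 => X0
  | k'.+1 => Phi *m traj Phi Psi X0 U k' + Psi *m U k'
  end.

Definition dt_controllable (K : pzRingType) (N : nat) (Phi Psi : 'M[K]_N) : Prop :=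
  forall X0 : 'cV[K]_N, exists (k : nat) (U : nat -> 'cV[K]_N),
    traj Phi Psi X0 U k = 0.

Definition cplx_mx (R : rcfType) (m n : nat) (A : 'M[R]_(m, n)) : 'M[complex R]_(m, n) :=
  map_mx (fun x : R => Complex x 0) A.

From HB Require Import structures.
From mathcomp Require Import all_boot all_order all_algebra.
From mathcomp Require Import complex.
From mathcomp Require Import reals sequences exp.
Set Implicit Arguments.
Unset Strict Implicit.
Unset Printing Implicit Defensive.
Import Order.TTheory GRing.Theory Num.Theory.
Local Open Scope ring_scope.

(* Hautus test.  Once the Krylov space spanned by B, AB, A^2 B, ... stops
   growing, its left annihilator is A-invariant and killed by B; over C an
   A-invariant nonzero subspace contains a left eigenvector, so if no left
   eigenvector of A is killed by B the Krylov space is everything, A^k X0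
   lies in it and k inputs cancel it.  Here the coefficient (c/a)(e^(ah) - 1)
   of W in Phi_s is nonzero, so left eigenvectors of Phi_s are left
   eigenvectors of W, and Psi_s is a nonzero multiple of Delta: the rank condition on
   [sI - W, Delta] is exactly the Hautus condition. *)

Lemma traj_sum (K : pzRingType) n (A B : 'M[K]_n) X0 U k :
  traj A B X0 U k = A ^+ k *m X0 + \sum_(j < k) A ^+ j *m B *m U (k.-1 - j)%N.
Proof.
have AS j : A *m A ^+ j = A ^+ j.+1 by rewrite exprS mulmxE.
elim: k => [|k IH] /=; first by rewrite expr0 mul1mx big_ord0 addr0.
rewrite IH mulmxDr mulmxA AS mulmx_sumr big_ord_recl /= expr0 mul1mx subn0.
rewrite -addrA; congr (_ + _); rewrite addrC; congr (_ + _).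
apply: eq_bigr => j _; rewrite /= !mulmxA AS /bump /= add1n.
by rewrite subnS predn_sub.
Qed.

Section Krylov.
Variables (F : fieldType) (n : nat) (A B : 'M[F]_n).

(* Transposed, since mxalgebra works with row spaces: this is the column space
   of [B, AB, ..., A^(k-1) B]. *)
Definition krylov_mx k := (\sum_(j < k) (A ^+ j *m B)^T)%MS.

Lemma krylov_mxS k : (krylov_mx k <= krylov_mx k.+1)%MS.
Proof. by rewrite /krylov_mx big_ord_recr /= addsmxSl. Qed.

Lemma krylov_mxMtr k : (krylov_mx k *m A^T <= krylov_mx k.+1)%MS.
Proof.
rewrite /krylov_mx sumsmxMr; apply/sumsmx_subP => j _.
rewrite -trmx_mul mulmxA mulmxE -exprS.
exact: (sumsmx_sup (Ordinal (ltn_ord j : (j.+1 < k.+1)%N))).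
Qed.

Lemma trmx_sub_krylov_mx k : (B^T <= krylov_mx k.+1)%MS.
Proof. by apply: (sumsmx_sup ord0) => //=; rewrite expr0 mul1mx. Qed.

Lemma krylov_mx_stationary : exists k, (krylov_mx k.+1 <= krylov_mx k)%MS.
Proof.
have [k stat_k | grow] :=
  pickP (fun k : 'I_n.+1 => (krylov_mx k.+1 <= krylov_mx k)%MS).
  by exists k.
have rank_ge k : (k <= n.+1)%N -> (k <= \rank (krylov_mx k))%N.
  elim: k => [//|k IH] lt_k_n.
  have ltS : (krylov_mx k < krylov_mx k.+1)%MS.
    by rewrite ltmxE krylov_mxS (grow (Ordinal lt_k_n)).
  exact: leq_ltn_trans (IH (ltnW lt_k_n)) (rank_ltmx ltS).
by have := leq_trans (rank_ge _ (leqnn _)) (rank_leq_col _); rewrite ltnn.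
Qed.

Lemma krylov_mx_full :
    (forall K : 'M[F]_n, (K *m A <= K)%MS -> K *m B = 0 -> K = 0) ->
  exists k, row_full (krylov_mx k.+1).
Proof.
move=> no_invariant; have [k stat_k] := krylov_mx_stationary.
exists k; set S := krylov_mx k.+1.
have SA : (S *m A^T <= S)%MS.
  exact: submx_trans (submxMr _ stat_k) (krylov_mxMtr _).
set K := kermx S^T.
have KA : (K *m A <= K)%MS.
  apply/sub_kermxP; case/submxP: SA => D /(congr1 trmx).
  rewrite !trmx_mul trmxK => AS.
  by rewrite -mulmxA AS mulmxA mulmx_ker mul0mx.
have KB : K *m B = 0.
  case/submxP: (trmx_sub_krylov_mx k) => D /(congr1 trmx).
  by rewrite trmxK trmx_mul => ->; rewrite mulmxA mulmx_ker mul0mx.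
have /eqP := no_invariant K KA KB.
rewrite -mxrank_eq0 mxrank_ker mxrank_tr subn_eq0 => rank_S.
by rewrite /row_full eqn_leq rank_leq_col.
Qed.

Lemma dt_controllable_krylov_full k :
  row_full (krylov_mx k.+1) -> dt_controllable A B.
Proof.
move=> full X0.
have /sub_sumsmxP [u def_u] : ((A ^+ k.+1 *m X0)^T <= krylov_mx k.+1)%MS.
  exact: submx_full.
exists k.+1, (fun i => - (u (inord (k - i)))^T); rewrite traj_sum.
have -> : A ^+ k.+1 *m X0 = \sum_(j < k.+1) A ^+ j *m B *m (u j)^T.
  rewrite -[LHS]trmxK def_u raddf_sum /=; apply: eq_bigr => j _.
  by rewrite trmx_mul trmxK.
rewrite -big_split big1 // => j _ /=.
by rewrite subKn ?leq_ord // inord_val mulmxN subrr.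
Qed.

End Krylov.

Lemma stablemx_eigenvector (C : closedFieldType) m n
    (K : 'M[C]_(m, n)) (A : 'M[C]_n) :
  (K *m A <= K)%MS -> K != 0 ->
  exists z, exists2 v : 'rV_n, (v <= K)%MS & v != 0 /\ v *m A = z *: v.
Proof.
move=> KA K0; set B := row_base K.
have BA : (B *m A <= B)%MS by rewrite stablemx_row_base.
have : size (char_poly (conjmx B A)) != 1%N.
  by rewrite size_char_poly; move: K0; rewrite -mxrank_eq0; case: (\rank K).
case/closed_rootP => z; rewrite -eigenvalue_root_char => /eigenvalueP [w wE w0].
have : (w <= eigenspace (conjmx B A) z)%MS by apply/eigenspaceP.
rewrite sub_eigenspace_conjmx ?row_base_free // => /eigenspaceP vE.
exists z, (w *m B); last by rewrite mulmx_free_eq0 ?row_base_free.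
by rewrite (submx_trans (submxMl w B)) // eq_row_base.
Qed.

Lemma hautus_dt_controllable (F : fieldType) (C : closedFieldType)
    (f : {rmorphism F -> C}) n (A B : 'M[F]_n) :
    (forall z (v : 'rV[C]_n),
       v *m map_mx f A = z *: v -> v *m map_mx f B = 0 -> v = 0) ->
  dt_controllable A B.
Proof.
move=> hautus.
suff [k] : exists k, row_full (krylov_mx A B k.+1).
  exact: dt_controllable_krylov_full.
apply: krylov_mx_full => K KA KB; apply/eqP.
rewrite -(inj_eq (@map_mx_inj _ _ f _ _)) map_mx0; apply/negPn/negP => Kf0.
have KfA : (map_mx f K *m map_mx f A <= map_mx f K)%MS.
  by rewrite -map_mxM map_submx.
have [z [v vK [v0 vA]]] := stablemx_eigenvector KfA Kf0.
have vB : v *m map_mx f B = 0.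
  by case/submxP: vK => D ->; rewrite -mulmxA -map_mxM KB map_mx0 mulmx0.
by rewrite (hautus z v vA vB) eqxx in v0.
Qed.

Lemma pair_controllable_left_eigen (K : fieldType) q s
    (A : 'M[K]_q) (B : 'M[K]_(q, s)) z (v : 'rV_q) :
  pair_controllable A B -> v *m A = z *: v -> v *m B = 0 -> v = 0.
Proof.
move=> ctrl vA vB; apply/eqP; rewrite -submx0.
have /eqP <- : kermx (row_mx (z%:M - A) B) == 0.
  by rewrite -mxrank_eq0 mxrank_ker ctrl subnn.
apply/sub_kermxP.
by rewrite mul_mx_row vB mulmxBr vA mul_mx_scalar subrr row_mx0.
Qed.

Lemma left_eigen_scalar_shift (K : fieldType) n (A : 'M[K]_n) e al z
    (v : 'rV_n) :
  al != 0 -> v *m (e%:M + al *: A) = z *: v -> v *m A = ((z - e) / al) *: v.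
Proof.
move=> al0; rewrite mulmxDr mul_mx_scalar -scalemxAr => vA.
apply: (scalerI al0); rewrite scalerA mulrC mulfVK // scalerBl -vA.
by rewrite addrC addKr.
Qed.

Lemma expR_sub1_neq0 (R : realType) (x : R) : x != 0 -> expR x - 1 != 0.
Proof.
by move=> x0; rewrite subr_eq0 -expR0; apply: contra x0 => /eqP/expR_inj ->.
Qed.

Theorem corollary8 (R : realType) (N : nat) (a b c h : R)
  (W : 'M[R]_N) (delta : 'I_N -> R) :
  (0 < N)%N -> a != 0 ->
  (forall i : 'I_N, W i i = 0) ->
  (forall i : 'I_N, delta i = 0 \/ delta i = 1) ->
  0 < h ->
  pair_controllable (cplx_mx W) (cplx_mx (diag_mx (\row_i delta i))) ->
  b != 0 -> c != 0 ->
  dt_controllable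
    ((expR (a * h))%:M + (c / a * (expR (a * h) - 1)) *: W)
    ((b / a * (expR (a * h) - 1)) *: diag_mx (\row_i delta i)).
Proof.
move=> _ a0 _ _ h0 ctrl b0 c0.
have e1 : expR (a * h) - 1 != 0.
  by rewrite expR_sub1_neq0 // mulf_neq0 ?(lt0r_neq0 h0).
set al := c / a * _; set be := b / a * _.
have al0 : al != 0 by rewrite !mulf_neq0 ?invr_eq0.
have be0 : be != 0 by rewrite !mulf_neq0 ?invr_eq0.
apply: (@hautus_dt_controllable _ _ (real_complex R)) => z v vPhi vPsi.
apply: (pair_controllable_left_eigen ctrl).
  move: vPhi; rewrite map_mxD map_scalar_mx map_mxZ.
  by apply: left_eigen_scalar_shift; rewrite fmorph_eq0.
apply/eqP; move: vPsi; rewrite map_mxZ -scalemxAr => /eqP.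
by rewrite scaler_eq0 fmorph_eq0 (negbTE be0).
Qed.
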